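(* Let $f\in\mathcal{V}$ and let $\mathcal{C},\mathcal{D}\subseteq\mathbb{R}^n$ be convex cones such that $f$ is positive definite with respect to $\mathcal{C}$ and $\mathcal{C}^-\cap\operatorname{cl}(\mathcal{D})=\{0\}$. Then $(f|_{\mathcal{C}})^\star\in\mathcal{V}$ and $(f|_{\mathcal{C}})^\star$ is positive definite with respect to $\mathcal{D}$.
   Context: Functions are extended real-valued $f:\mathbb{R}^n\to\mathbb{R}\cup\{\pm\infty\}$; $f$ is convex/closed if its epigraph $\{(x,\alpha)\mid \alpha\ge f(x)\}$ is convex/closed. $f$ is positively homogeneous of degree 2 if $f(\lambda x)=\lambda^2 f(x)$ for all $\lambda\ge0$, $x\in\mathbb{R}^n$; $f$ is positive semi-definite if $f(0)=0$ and $f(x)\ge0$ for all $x$. $\mathcal{V}$ is the set of all extended real-valued functions on $\mathbb{R}^n$ that are closed, convex, positive semi-definite and positively homogeneous of degree 2. A convex cone is a nonempty convex set closed under nonnegative scalar multiplication. For a convex cone $\mathcal{C}$, $f\in\mathcal{V}$ is positive definite with respect to $\mathcal{C}$ if there exist $0<\alpha\le\beta<\infty$ with $\alpha\|x\|^2\le f(x)\le\beta\|x\|^2$ for all $x\in\mathcal{C}$. The restriction is $f|_{\mathcal{C}}(x)=f(x)+\delta(x\mid\mathcal{C})$, where $\delta(x\mid\mathcal{C})=0$ if $x\in\mathcal{C}$ and $+\infty$ otherwise. The convex conjugate is $f^\star(y)=\sup_{x\in\mathbb{R}^n}\{y\cdot x-f(x)\}$. $\mathcal{C}^-=\{y\mid\langle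 x,y\rangle\le0\ \forall x\in\mathcal{C}\}$ is the negative polar cone and $\operatorname{cl}$ denotes closure. *)

From HB Require Import structures.
From mathcomp Require Import all_boot all_order all_algebra.
From mathcomp Require Import all_classical all_reals all_analysis.
Set Implicit Arguments. Unset Strict Implicit. Unset Printing Implicit Defensive.
Import Order.TTheory GRing.Theory Num.Theory.
Import numFieldNormedType.Exports.
Local Open Scope classical_set_scope.
Local Open Scope ring_scope.

Section Defs.
Variables (R : realType) (n : nat).
Local Notation V := 'rV[R]_n.

Definition dotp (x y : V) : R := \sum_(i < n) x ord0 i * y ord0 i.
Definition sqnorm (x : V) : R := dotp x x.

Definition epigraph (f : V -> \bar R) : set (V * R) :=
  [set p | (f p.1 <= p.2%:E)%E].

Definition ext_convex (f : V -> \bar R) : Prop :=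
  forall p q, epigraph f p -> epigraph f q -> forall t : R, 0 <= t <= 1 ->
    epigraph f (t *: p.1 + (1 - t) *: q.1, t * p.2 + (1 - t) * q.2).

Definition ext_closed (f : V -> \bar R) : Prop := closed (epigraph f).

Definition psd (f : V -> \bar R) : Prop :=
  f 0 = 0%E /\ forall x, (0 <= f x)%E.

Definition pos_hom2 (f : V -> \bar R) : Prop :=
  forall (l : R) (x : V), 0 <= l -> f (l *: x) = ((l ^+ 2)%:E * f x)%E.

Definition classV (f : V -> \bar R) : Prop :=
  ext_closed f /\ ext_convex f /\ psd f /\ pos_hom2 f.

Definition cvx_set (A : set V) : Prop :=
  forall x y, A x -> A y -> forall t : R, 0 <= t <= 1 -> A (t *: x + (1 - t) *: y).

Definition convex_cone (C : set V) : Prop :=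
  C !=set0 /\ cvx_set C /\ forall (l : R) x, 0 <= l -> C x -> C (l *: x).

Definition posdef_wrt (f : V -> \bar R) (C : set V) : Prop :=
  exists alpha beta : R, 0 < alpha /\ alpha <= beta /\
    forall x, C x -> ((alpha * sqnorm x)%:E <= f x /\ f x <= (beta * sqnorm x)%:E)%E.

Definition cone_indicator (C : set V) (x : V) : \bar R :=
  if `[< C x >] then 0%E else +oo%E.

Definition restr_cone (f : V -> \bar R) (C : set V) : V -> \bar R :=
  fun x => (f x + cone_indicator C x)%E.

Definition cvx_conj (f : V -> \bar R) : V -> \bar R :=
  fun y => ereal_sup [set ((dotp y x)%:E - f x)%E | x in [set: V]].

Definition neg_polar (C : set V) : set V :=
  [set y | forall x, C x -> dotp x y <= 0].

End Defs.

(* On C the function f is squeezed between alpha |x|^2 and beta |x|^2.  The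
   conjugate h of f|_C is the supremum over x in C of the affine functions
   y |-> <y, x> - f x, so it is closed and convex; testing at x = 0 gives
   h >= 0, Young's inequality gives h y <= |y|^2 / (4 alpha), and the degree 2
   homogeneity of f passes to h.  For the lower bound on D, the hypothesis on
   the polar cone says that every unit vector of cl D makes an acute angle with
   some point of C; by compactness of the unit sphere of cl D the angle can be
   bounded uniformly, i.e. <y, u>^2 >= c |y|^2 |u|^2 for some u in C.  Testing
   the supremum at the best multiple of u then gives h y >= c |y|^2 / (4 beta). *)
From HB Require Import structures.
From mathcomp Require Import all_boot all_order all_algebra.
From mathcomp Require Import all_classical all_reals all_analysis.
From mathcomp Require Import ring lra.
Import Order.TTheory GRing.Theory Num.Theory.
Import numFieldNormedType.Exports.
Local Open Scope classical_set_scope.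
Local Open Scope ring_scope.
Set Implicit Arguments. Unset Strict Implicit.

Lemma continuous_sum (R : realType) (T : topologicalType) (I : Type) (s : seq I)
    (G : I -> T -> R) :
  (forall i, continuous (G i)) -> continuous (fun v => \sum_(i <- s) G i v).
Proof.
move=> G_cont; elim: s => [|a s IHs].
  under eq_fun do rewrite big_nil; exact: cst_continuous.
under eq_fun do rewrite big_cons.
by move=> v; apply: continuousD; [exact: G_cont | exact: IHs].
Qed.

Lemma seq_pos_lbound (R : realDomainType) (T : eqType) (s : seq T) (v : T -> R) :
  exists2 c, 0 < c & forall p, p \in s -> 0 < v p -> c <= v p.
Proof.
elim: s => [|a s [c c_gt0 c_lb]]; first by exists 1.
have [va_gt0|va_le0] := ltP 0 (v a).
  exists (Num.min (v a) c); first by rewrite lt_min va_gt0 c_gt0.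
  move=> p; rewrite in_cons => /predU1P[-> _|ps vp_gt0]; first by rewrite ge_min lexx.
  by rewrite ge_min c_lb ?orbT.
exists c => // p; rewrite in_cons => /predU1P[-> va_gt0|]; last exact: c_lb.
by move: va_le0; rewrite leNgt va_gt0.
Qed.

Section Dotp.
Variables (R : realType) (n : nat).
Local Notation V := 'rV[R]_n.
Implicit Types x y z : V.

Lemma dotpC x y : dotp x y = dotp y x.
Proof. by apply: eq_bigr => i _; rewrite mulrC. Qed.

Lemma dotpDl x y z : dotp (x + y) z = dotp x z + dotp y z.
Proof. by rewrite /dotp -big_split; apply: eq_bigr => i _; rewrite mxE mulrDl. Qed.

Lemma dotpZl (a : R) x z : dotp (a *: x) z = a * dotp x z.
Proof. by rewrite /dotp mulr_sumr; apply: eq_bigr => i _; rewrite mxE mulrA. Qed.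

Lemma dotpZr (a : R) x z : dotp z (a *: x) = a * dotp z x.
Proof. by rewrite dotpC dotpZl dotpC. Qed.

Lemma dotp0l x : dotp 0 x = 0.
Proof. by rewrite /dotp big1 // => i _; rewrite mxE mul0r. Qed.

Lemma sqnorm_ge0 x : 0 <= sqnorm x.
Proof. by rewrite sumr_ge0 // => i _; rewrite -expr2 sqr_ge0. Qed.

Lemma sqnormZ (a : R) x : sqnorm (a *: x) = a ^+ 2 * sqnorm x.
Proof. by rewrite /sqnorm dotpZl dotpZr mulrA expr2. Qed.

Lemma sqnorm0 : sqnorm (0 : V) = 0.
Proof. exact: dotp0l. Qed.

Lemma sqnorm_eq0_dotp x y : sqnorm x = 0 -> dotp x y = 0.
Proof.
move=> /eqP; rewrite psumr_eq0 => [/allP x0|i _]; last by rewrite -expr2 sqr_ge0.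
rewrite /dotp big1 // => i _.
have /implyP/(_ isT) := x0 i (mem_index_enum i).
by rewrite mulf_eq0 orbb => /eqP ->; rewrite mul0r.
Qed.

Lemma young_dotp (a : R) x y : 0 < a -> dotp y x - a * sqnorm x <= sqnorm y / (4 * a).
Proof.
move=> a_gt0; rewrite /sqnorm /dotp mulr_sumr mulr_suml -sumrB ler_sum // => i _.
set p := y ord0 i; set q := x ord0 i.
rewrite ler_pdivlMr ?mulr_gt0 //.
have : 0 <= (p - 2 * a * q) ^+ 2 by rewrite sqr_ge0.
nra.
Qed.

Lemma dotp_continuous x : continuous (fun v : V => dotp v x).
Proof.
apply: continuous_sum => i v; apply: continuousM; first exact: coord_continuous.
exact: cst_continuous.
Qed.

Lemma sqnorm_continuous : continuous (@sqnorm R n).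
Proof. by apply: continuous_sum => i v; apply: continuousM; exact: coord_continuous. Qed.

End Dotp.

Section ConvexCone.
Variables (R : realType) (n : nat) (C : set 'rV[R]_n).
Hypothesis C_cone : convex_cone C.

Lemma convex_cone0 : C 0.
Proof.
case: C_cone => [[x Cx] [_ C_scale]].
by have := C_scale 0 x (lexx _) Cx; rewrite scale0r.
Qed.

Lemma convex_coneZ (l : R) x : 0 <= l -> C x -> C (l *: x).
Proof. by case: C_cone => _ [_]; apply. Qed.

End ConvexCone.

Definition uniformly_acute (R : realType) (n : nat) (C D : set 'rV[R]_n) (c : R) :=
  forall y, D y -> 0 < sqnorm y ->
  exists u, [/\ C u, 0 < sqnorm u, 0 < dotp y u & c * sqnorm y * sqnorm u <= dotp y u ^+ 2].

Section Conjugate.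
Variables (R : realType) (n : nat) (f : 'rV[R]_n -> \bar R) (C : set 'rV[R]_n).
Variables (alpha beta : R).
Local Notation V := 'rV[R]_n.
Hypothesis C_cone : convex_cone C.
Hypothesis f_classV : classV f.
Hypothesis alpha_gt0 : 0 < alpha.
Hypothesis f_bounds : forall x, C x ->
  ((alpha * sqnorm x)%:E <= f x /\ f x <= (beta * sqnorm x)%:E)%E.

Local Notation g := (restr_cone f C).
Local Notation h := (cvx_conj (restr_cone f C)).
Let fr (x : V) := fine (f x).

Lemma f_fineE x : C x -> f x = (fr x)%:E.
Proof.
move=> /f_bounds; rewrite /fr; case: (f x) => [r| |] //=.
  by move=> [_]; rewrite leye_eq.
by move=> []; rewrite leeNy_eq.
Qed.

Lemma fr_bounds x : C x -> alpha * sqnorm x <= fr x <= beta * sqnorm x.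
Proof. by move=> Cx; have := f_bounds Cx; rewrite (f_fineE Cx) !lee_fin => -[-> ->]. Qed.

Lemma fr0 : fr 0 = 0.
Proof.
have := fr_bounds (convex_cone0 C_cone); rewrite sqnorm0 !mulr0.
by move=> fr0_bounds; apply/eqP; rewrite eq_le andbC.
Qed.

Lemma frZ (l : R) x : 0 <= l -> C x -> fr (l *: x) = l ^+ 2 * fr x.
Proof.
by case: f_classV => _ [_ [_ f_hom]] l_ge0 Cx; rewrite /fr f_hom // (f_fineE Cx).
Qed.

Lemma restr_cone_termE y x : C x -> ((dotp y x)%:E - g x)%E = (dotp y x - fr x)%:E.
Proof. by move=> Cx; rewrite /restr_cone /cone_indicator asboolT // adde0 f_fineE. Qed.

Lemma restr_cone_termNy y x : ~ C x -> ((dotp y x)%:E - g x)%E = -oo%E.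
Proof.
move=> nCx; rewrite /restr_cone /cone_indicator asboolF // addey //.
by case: f_classV => _ [_ [[_ f_ge0] _]]; apply/eqP => fx; have := f_ge0 x; rewrite fx.
Qed.

Lemma cvx_conj_le y (M : \bar R) :
  (forall x, C x -> ((dotp y x - fr x)%:E <= M)%E) -> (h y <= M)%E.
Proof.
move=> M_ub; apply: ge_ereal_sup => _ [x _ <-].
have [Cx|nCx] := pselect (C x); first by rewrite restr_cone_termE // M_ub.
by rewrite restr_cone_termNy // leNye.
Qed.

Lemma cvx_conj_ge y x : C x -> ((dotp y x - fr x)%:E <= h y)%E.
Proof. by move=> Cx; apply: ereal_sup_ubound; exists x => //; rewrite restr_cone_termE. Qed.

Lemma cvx_conj_le_sqnorm y : (h y <= (sqnorm y / (4 * alpha))%:E)%E.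
Proof.
apply: cvx_conj_le => x Cx; rewrite lee_fin.
by apply: le_trans (young_dotp x y alpha_gt0); rewrite lerB // (andP (fr_bounds Cx)).1.
Qed.

Lemma cvx_conj_ge0 y : (0 <= h y)%E.
Proof.
by have := cvx_conj_ge y (convex_cone0 C_cone); rewrite fr0 dotpC dotp0l subr0.
Qed.

Let hr y := fine (h y).

Lemma cvx_conj_fineE y : h y = (hr y)%:E.
Proof. by have := cvx_conj_ge0 y; have := cvx_conj_le_sqnorm y; rewrite /hr; case: (h y). Qed.

Lemma hr_le y (M : R) : (forall x, C x -> dotp y x - fr x <= M) -> hr y <= M.
Proof.
by move=> M_ub; rewrite -lee_fin -cvx_conj_fineE; apply: cvx_conj_le => x /M_ub.
Qed.

Lemma hr_ge y x : C x -> dotp y x - fr x <= hr y.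
Proof. by move=> Cx; rewrite -lee_fin -cvx_conj_fineE; exact: cvx_conj_ge. Qed.

Lemma hr_ge0 y : 0 <= hr y.
Proof. by rewrite -lee_fin -cvx_conj_fineE cvx_conj_ge0. Qed.

Lemma hr0 : hr 0 = 0.
Proof.
apply/eqP; rewrite eq_le hr_ge0 andbT -lee_fin -cvx_conj_fineE.
by apply: le_trans (cvx_conj_le_sqnorm 0) _; rewrite sqnorm0 mul0r.
Qed.

Lemma hrZ_le (l : R) y : 0 < l -> hr (l *: y) <= l ^+ 2 * hr y.
Proof.
move=> l_gt0; apply: hr_le => x Cx.
have Cz : C (l^-1 *: x) by apply: convex_coneZ; rewrite ?invr_ge0 ?ltW.
have -> : x = l *: (l^-1 *: x) by rewrite scalerA divff ?scale1r ?gt_eqF.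
rewrite (frZ (ltW l_gt0) Cz) dotpZl dotpZr mulrA -expr2 -mulrBr.
by rewrite ler_wpM2l ?sqr_ge0 ?hr_ge.
Qed.

Lemma hrZ (l : R) y : 0 <= l -> hr (l *: y) = l ^+ 2 * hr y.
Proof.
rewrite le_eqVlt => /predU1P[<-|l_gt0]; first by rewrite scale0r hr0 expr0n mul0r.
apply/eqP; rewrite eq_le hrZ_le //=.
have linv_gt0 : 0 < l^-1 by rewrite invr_gt0.
have := hrZ_le (l *: y) linv_gt0.
rewrite scalerA mulVf ?gt_eqF // scale1r => /(ler_wpM2l (sqr_ge0 l)).
by rewrite mulrA -exprMn mulfV ?gt_eqF // expr1n mul1r.
Qed.

Lemma epigraph_cvx_conjE :
  epigraph h = \bigcap_(x in C) [set p : V * R | dotp p.1 x - p.2 <= fr x].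
Proof.
rewrite predeqE => p; rewrite /epigraph /= cvx_conj_fineE lee_fin; split.
  by move=> hp x Cx /=; have := hr_ge p.1 Cx; lra.
by move=> hp; apply: hr_le => x /hp /=; lra.
Qed.

Lemma cvx_conj_closed : ext_closed h.
Proof.
rewrite /ext_closed epigraph_cvx_conjE; apply: closed_bigI => x Cx.
apply: (preimage_closed (f := fun p : V * R => dotp p.1 x - p.2)
  (D := [set r | r <= fr x])); last exact: closed_le.
move=> p _; apply: (continuousB (f := fun p : V * R => dotp p.1 x)); last exact: cvg_snd.
apply: (continuous_comp (f := fst) (g := fun v => dotp v x)); first exact: cvg_fst.
exact: dotp_continuous.
Qed.

Lemma cvx_conj_convex : ext_convex h.
Proof.
move=> p q; rewrite /epigraph /= !cvx_conj_fineE !lee_fin => hp hq t /andP[t_ge0 t_le1].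
rewrite /= cvx_conj_fineE lee_fin; apply: hr_le => x Cx; rewrite dotpDl !dotpZl.
by have := hr_ge p.1 Cx; have := hr_ge q.1 Cx; nra.
Qed.

Lemma cvx_conj_classV : classV h.
Proof.
split; [exact: cvx_conj_closed | split; [exact: cvx_conj_convex | split]].
- by split; [rewrite cvx_conj_fineE hr0 | exact: cvx_conj_ge0].
- by move=> l y l_ge0; rewrite !cvx_conj_fineE hrZ.
Qed.

(* Test the supremum at x = t u with t = <y, u> / (2 beta |u|^2), the maximiser
   of t <y, u> - beta t^2 |u|^2. *)
Lemma hr_ge_sqnorm (c : R) y u : 0 < beta -> C u -> 0 < sqnorm u -> 0 < dotp y u ->
  c * sqnorm y * sqnorm u <= dotp y u ^+ 2 -> c / (4 * beta) * sqnorm y <= hr y.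
Proof.
move=> beta_gt0 Cu su_gt0 yu_gt0 angle.
set p := dotp y u in yu_gt0 angle *; set s := sqnorm u in su_gt0 angle *.
set t := p / (2 * beta * s).
have t_ge0 : 0 <= t by rewrite divr_ge0 ?ltW ?mulr_gt0.
have Ctu : C (t *: u) by exact: convex_coneZ.
have := hr_ge y Ctu; have := (andP (fr_bounds Ctu)).2.
rewrite dotpZr sqnormZ -/p -/s => fr_le hr_ge_t.
have -> : c / (4 * beta) * sqnorm y = (c * sqnorm y * s) / (4 * beta * s).
  by field; rewrite !gt_eqF.
have : p ^+ 2 / (4 * beta * s) = t * p - beta * (t ^+ 2 * s).
  by rewrite /t; field; rewrite !gt_eqF.
have : c * sqnorm y * s / (4 * beta * s) <= p ^+ 2 / (4 * beta * s).
  by rewrite ler_wpM2r // invr_ge0 ltW // !mulr_gt0.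
lra.
Qed.

Lemma cvx_conj_posdef (D : set V) (c : R) : alpha <= beta -> 0 < c ->
  uniformly_acute C D c -> posdef_wrt h D.
Proof.
move=> alpha_le_beta c_gt0 acute; have beta_gt0 : 0 < beta by apply: lt_le_trans alpha_le_beta.
exists (Num.min (c / (4 * beta)) (4 * alpha)^-1), (4 * alpha)^-1.
split; first by rewrite lt_min !divr_gt0 ?invr_gt0 ?mulr_gt0.
split=> [|y Dy]; first by rewrite ge_min lexx orbT.
split; last by apply: le_trans (cvx_conj_le_sqnorm y) _; rewrite lee_fin mulrC.
rewrite cvx_conj_fineE lee_fin.
have := sqnorm_ge0 y; rewrite le_eqVlt => /predU1P[<-|y_gt0]; first by rewrite mulr0 hr_ge0.
have [u [Cu u_gt0 yu_gt0 angle]] := acute y Dy y_gt0.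
apply: le_trans (hr_ge_sqnorm beta_gt0 Cu u_gt0 yu_gt0 angle).
by rewrite ler_wpM2r ?sqnorm_ge0 // ge_min lexx.
Qed.

End Conjugate.

Section PolarSeparation.
Variables (R : realType) (n : nat) (C D : set 'rV[R]_n).
Local Notation V := 'rV[R]_n.
Hypothesis D_cone : convex_cone D.
Hypothesis polar_closure : neg_polar C `&` closure D = [set 0].

Let S := closure D `&` [set y : V | sqnorm y = 1].

Lemma sphere_closure_compact : compact S.
Proof.
apply: (@subclosed_compact _ S [set v : V | forall i, `[(-1 : R), 1]%classic (v ord0 i)]).
- apply: closedI; first exact: closed_closure.
  apply: (preimage_closed (f := @sqnorm R n) (D := [set 1])); last exact: closed_eq.
  by move=> v _; exact: sqnorm_continuous.
- by apply: (@rV_compact R n (fun=> `[(-1 : R), 1]%classic)) => i; exact: segment_compact.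
- move=> v [_ /= v1] i /=.
  have : v ord0 i * v ord0 i <= 1.
    rewrite -v1 /sqnorm /dotp (bigD1 i) //= lerDl sumr_ge0 // => j _.
    by rewrite -expr2 sqr_ge0.
  by rewrite in_itv /= => vi2_le1; apply/andP; split; nra.
Qed.

Lemma exists_acute_cone y : closure D y -> y != 0 -> exists2 x, C x & 0 < dotp x y.
Proof.
move=> Dy y_neq0; apply: contrapT => no_acute; move/eqP: y_neq0; apply.
have : (neg_polar C `&` closure D) y.
  split=> // x Cx; rewrite leNgt; apply/negP => xy_gt0; apply: no_acute.
  by exists x.
by rewrite polar_closure.
Qed.

(* Compactness of S: the open sets [set z | e < <z, x>] with x in C, e > 0
   cover S, and each of the finitely many needed ones bounds the angle. *)
Lemma uniform_acute_sphere : exists2 c : R, 0 < c & forall z, S z ->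
  exists u, [/\ C u, 0 < sqnorm u, 0 < dotp z u & c * sqnorm u <= dotp z u ^+ 2].
Proof.
pose I := (V * R)%type.
pose J : set I := [set p | [/\ C p.1, 0 < p.2 & 0 < sqnorm p.1]].
pose F (p : I) : set V := [set z | p.2 < dotp z p.1].
have F_open i : J i -> open (F i).
  by move=> _; apply: (continuousP _).1 (@open_gt R i.2); exact: dotp_continuous.
have S_cover : S `<=` cover J F.
  move=> y [Dy y1]; have y_neq0 : y != 0.
    by apply/eqP => y0; move: y1; rewrite y0 /= sqnorm0 => /eqP; rewrite eq_sym oner_eq0.
  have [x Cx xy_gt0] := exists_acute_cone Dy y_neq0.
  have x_gt0 : 0 < sqnorm x.
    rewrite lt_def sqnorm_ge0 andbT; apply: contraTneq xy_gt0 => /(sqnorm_eq0_dotp y)->.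
    by rewrite ltxx.
  by exists (x, dotp y x / 2); rewrite /J /F /= dotpC; [split; rewrite ?divr_gt0 | lra].
have [fin_J J'_sub J'_cover] : finite_subset_cover J F S.
  by move: sphere_closure_compact; rewrite compact_cover; apply.
have [c c_gt0 c_lb] := seq_pos_lbound (finmap.enum_fset fin_J) (fun p : I => p.2 ^+ 2 / sqnorm p.1).
exists c => // z Sz; have [p J'p zp] := J'_cover z Sz.
have := J'_sub p J'p; rewrite inE => -[Cp e_gt0 sp_gt0].
have := c_lb p J'p (divr_gt0 (exprn_gt0 2 e_gt0) sp_gt0); rewrite ler_pdivlMr // => c_le.
have zp_gt0 : 0 < dotp z p.1 by exact: lt_trans zp.
exists p.1; split => //; apply: le_trans c_le _.
by rewrite lerXn2r ?nnegrE ?ltW.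
Qed.

Lemma uniform_acute_cone : exists2 c : R, 0 < c & uniformly_acute C D c.
Proof.
have [c c_gt0 c_lb] := uniform_acute_sphere; exists c => // y Dy y_gt0.
set s := Num.sqrt (sqnorm y); set z := s^-1 *: y.
have s_gt0 : 0 < s by rewrite sqrtr_gt0.
have s2 : s ^+ 2 = sqnorm y by rewrite sqr_sqrtr ?sqnorm_ge0.
have Sz : S z.
  split; first by apply: subset_closure; apply: convex_coneZ; rewrite ?invr_ge0 ?ltW.
  by rewrite /= sqnormZ exprVn s2 mulVf ?gt_eqF.
have [u [Cu u_gt0 zu_gt0 angle]] := c_lb z Sz.
have yuE : dotp y u = s * dotp z u by rewrite -dotpZl scalerA divff ?scale1r ?gt_eqF.
exists u; split => //; rewrite yuE ?mulr_gt0 //.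
by rewrite exprMn s2 -mulrA mulrCA ler_wpM2l ?sqnorm_ge0.
Qed.

End PolarSeparation.

Unset Implicit Arguments.

Theorem theorem1 (R : realType) (n : nat) (f : 'rV[R]_n -> \bar R)
  (C D : set 'rV[R]_n) :
  classV f -> convex_cone C -> convex_cone D -> posdef_wrt f C ->
  neg_polar C `&` closure D = [set 0] ->
  classV (cvx_conj (restr_cone f C)) /\ posdef_wrt (cvx_conj (restr_cone f C)) D.
Proof.
move=> f_classV C_cone D_cone [alpha [beta [alpha_gt0 [alpha_le_beta f_bounds]]]] polar.
split; first exact: cvx_conj_classV f_bounds.
have [c c_gt0 acute] := uniform_acute_cone D_cone polar.
exact: (cvx_conj_posdef C_cone f_classV alpha_gt0 f_bounds alpha_le_beta c_gt0 acute).
Qed.
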